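(* Let $A$ be a finite set with $q:=|A|\ge 2$ and let $n\ge 2$ be an integer. (a) Unless $q=n=2$, the symmetric group $\mathrm{Sym}(A^n)$ is generated by $n$ instructions. (b) If $q\ge 3$, then the alternating group $\mathrm{Alt}(A^n)$ is generated by $n$ instructions (i.e. there exist $n$ instructions, each an even permutation of $A^n$, which generate $\mathrm{Alt}(A^n)$).
   Context: Elements of $A^n$ are written $x=(x_1,\ldots,x_n)$. Any $f\in\mathrm{Sym}(A^n)$ is written $f(x)=(f_1(x),\ldots,f_n(x))$ with coordinate functions $f_i:A^n\to A$; the $i$-th coordinate function is trivial if $f_i(x)=x_i$ for all $x$. An instruction is a permutation $g$ of $A^n$ with at most one nontrivial coordinate function, i.e. $g(x)=(x_1,\ldots,x_{j-1},g_j(x),x_{j+1},\ldots,x_n)$ for some $j$ (it is said to update register $j$); by convention the identity is also an instruction. *)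

From mathcomp Require Import all_boot all_fingroup all_solvable.
Set Implicit Arguments. Unset Strict Implicit. Unset Printing Implicit Defensive.


Definition instruction (A : finType) (n : nat) (g : {perm {ffun 'I_n -> A}}) : Prop :=
  exists j : 'I_n, forall (x : {ffun 'I_n -> A}) (i : 'I_n), i != j -> g x i = x i.

(* The generators live on registers [i0] and [i1]. Off register [i0], each one
   cycles [A] by the full cycle [sgm], except at one or two states [spot a]
   (register [i0] holding [a], all others [a0]) where it uses the cycle [sgm'] of
   [A] minus [a0]. Register [i0] holds a seed: in context [spot a0] it acts by the
   transposition (a0 a1) for (a), resp. the 3-cycle (a0 a1 a2) for (b), and in all
   other contexts by elements of order dividing 3, resp. 2; so a power of it is the
   transposition (spot a0, spot a1), resp. the 3-cycle (spot a0, spot a1, spot a2).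
   The points [y] for which (spot a0, y), resp. (spot a0, spot a1, y), lies in the
   generated group form a set preserved by every group element that maps one,
   resp. two, of its points back into it, hence by the generators and their
   inverses. Layer by layer in the value of register [i0], the transitivity of
   [sgm] and [sgm'] shows this set is everything, and such transpositions generate
   Sym, such 3-cycles Alt. In (b) the generators are even by a parity count over
   the contexts. *)

From mathcomp Require Import all_boot all_fingroup all_solvable zify.
Set Implicit Arguments. Unset Strict Implicit. Unset Printing Implicit Defensive.

Local Open Scope group_scope.

Lemma tpermE (T : finType) (x y z : T) :
  tperm x y z = if z == x then y else if z == y then x else z.
Proof. by case: tpermP => [->|->|/eqP/negbTE-> /eqP/negbTE->]; rewrite ?eqxx //; case: eqP. Qed.

(* Decides identities between products of transpositions of pairwise distinct
   variables, pointwise. *)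
Ltac perm_by_cases := let w := fresh "w" in
  apply/permP => w; rewrite ?permM ?perm1 ?tpermE;
  repeat match goal with
  | |- context [?u == ?v] => is_var u; is_var v;
      case: (eqVneq u v) => [?|/eqP ?]; [subst|]; rewrite ?eqxx /=
  end; try congruence.

Section ThreeCycles.
Variable T : finType.
Implicit Types (a b c p y : T).

(* The 3-cycle a -> b -> c -> a (permutations compose left to right). *)
Definition cyc3 a b c : {perm T} := tperm a b * tperm a c.

Lemma cyc3_rot a b c : a != b -> b != c -> a != c -> cyc3 a b c = cyc3 b c a.
Proof. move=> /eqP ab /eqP bc /eqP ac; rewrite /cyc3; perm_by_cases. Qed.

Lemma cyc3J a b c (s : {perm T}) : cyc3 a b c ^ s = cyc3 (s a) (s b) (s c).
Proof. by rewrite /cyc3 conjMg !tpermJ. Qed.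

Lemma cyc3V a b c : (cyc3 a b c)^-1 = tperm a c * tperm a b.
Proof. by rewrite /cyc3 invMg !tpermV. Qed.

Lemma odd_cyc3 a b c : a != b -> a != c -> odd_perm (cyc3 a b c) = false.
Proof. by move=> ab ac; rewrite /cyc3 odd_mul_tperm odd_tperm ab ac. Qed.

Lemma cyc3_expg3 a b c : a != b -> a != c -> b != c -> cyc3 a b c ^+ 3 = 1.
Proof. move=> /eqP ab /eqP ac /eqP bc; rewrite !expgS expg0 mulg1 /cyc3; perm_by_cases. Qed.

Definition cyc3_gen p p' := <<[set cyc3 p p' y | y in [set y | y != p]]>>.

Lemma cyc3_gen_coset p p' (s : {perm T}) :
  (s \in cyc3_gen p p') || (s * tperm p p' \in cyc3_gen p p').
Proof.
have cyc3H y : y != p -> cyc3 p p' y \in cyc3_gen p p'.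
  by move=> yp; rewrite mem_gen //; apply/imsetP; exists y; rewrite ?inE.
have : s \in <<[set tperm p y | y in T]>> by rewrite gen_tperm inE.
case/gen_prodgP => m [c Hc ->]; elim: m c Hc => [|m IH] c Hc.
  by rewrite big_ord0 group1.
rewrite big_ord_recr /=; have /imsetP [y _ ->] := Hc ord_max.
set s' := \prod_(i < m) _; case: (eqVneq y p) => [->|yp].
  by rewrite tperm1 mulg1; apply: IH.
have /orP [s'H|s'H] := IH (fun i => c (widen_ord (leqnSn m) i)) (fun i => Hc _).
  apply/orP; right; rewrite -mulgA -cyc3V.
  by rewrite groupM ?groupV ?cyc3H.
have -> : s' * tperm p y = (s' * tperm p p') * cyc3 p p' y.
  by rewrite /cyc3 mulgA -(mulgA s') tperm2 mulg1.
by rewrite groupM ?cyc3H.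
Qed.

Lemma Alt_cyc3_gen p p' : p != p' -> 'Alt_T = cyc3_gen p p' :> {set _}.
Proof.
move=> pp'; apply/eqP; rewrite eqEsubset andbC.
have HA : cyc3_gen p p' \subset 'Alt_T.
  rewrite gen_subG; apply/subsetP => s /imsetP [y]; rewrite inE => yp ->.
  by rewrite Alt_even odd_cyc3 // eq_sym.
rewrite HA /=; apply/subsetP => s sA; have /orP [//|sH] := cyc3_gen_coset p p' s.
have := subsetP HA _ sH; rewrite !Alt_even odd_permM odd_tperm pp' in sA *.
by rewrite addbT sA.
Qed.

End ThreeCycles.

Section Links.
Variables (T : finType) (G : {group {perm T}}).
Implicit Types (a b c u v x y z : T).

Section TpermLink.
Variable p : T.

Definition tperm_link := [set y | tperm p y \in G].

Lemma tperm_link_id : p \in tperm_link.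
Proof. by rewrite inE tperm1 group1. Qed.

Lemma tperm_linkP u v : u \in tperm_link -> v \in tperm_link -> tperm u v \in G.
Proof.
rewrite !inE => Gu Gv; case: (eqVneq u p) => [->//|up].
case: (eqVneq v p) => [->|vp]; first by rewrite tpermC.
case: (eqVneq u v) => [->|uv]; first by rewrite tperm1 group1.
have -> : tperm u v = tperm p v ^ tperm p u by rewrite tpermJ tpermL tpermD // eq_sym.
by rewrite groupJ.
Qed.

Lemma tperm_link_stable g x : g \in G -> x \in tperm_link -> g x \in tperm_link ->
  forall y, y \in tperm_link -> g y \in tperm_link.
Proof.
move=> gG xS gxS y yS; have Gxy : tperm (g x) (g y) \in G.
  by rewrite -tpermJ groupJ // tperm_linkP.
rewrite inE; move: (gxS); rewrite inE => Ggx.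
case: (eqVneq (g x) p) => [<-//|gxp].
case: (eqVneq (g y) p) => [->|gyp]; first by rewrite tperm1 group1.
case: (eqVneq (g x) (g y)) => [<-//|gxy].
have -> : tperm p (g y) = tperm (g x) (g y) ^ tperm p (g x).
  by rewrite tpermJ tpermR tpermD // eq_sym.
by rewrite groupJ.
Qed.

Lemma tperm_link_full : (forall y, y \in tperm_link) -> G :=: [set: {perm T}].
Proof.
move=> Hall; apply/eqP; rewrite eqEsubset subsetT /= -(gen_tperm p) gen_subG.
by apply/subsetP => s /imsetP [y _ ->]; have := Hall y; rewrite inE.
Qed.

End TpermLink.

Section Cyc3Link.
Variables p p' : T.
Hypothesis pp' : p != p'.

Definition cyc3_link := p |: [set y | cyc3 p p' y \in G].

Lemma cyc3_link_id : p \in cyc3_link.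
Proof. by rewrite !inE eqxx. Qed.

Lemma cyc3_link_id' : p' \in cyc3_link.
Proof. by rewrite !inE /cyc3 tperm2 group1 orbT. Qed.

Lemma cyc3_linkP y : y \in cyc3_link -> y != p -> cyc3 p p' y \in G.
Proof. by rewrite !inE => /orP [/eqP->|//]; rewrite eqxx. Qed.

Lemma link_tperm_pair u v : u \in cyc3_link -> v \in cyc3_link -> u != p -> v != p ->
  tperm p u * tperm p v \in G.
Proof.
move=> uS vS up vp; have := groupM (groupVr (cyc3_linkP uS up)) (cyc3_linkP vS vp).
by rewrite cyc3V /cyc3 -mulgA (mulgA (tperm p p')) tperm2 mul1g.
Qed.

Lemma link_of_tperm_pair v z : v \in cyc3_link -> v != p ->
  tperm p v * tperm p z \in G -> z \in cyc3_link.
Proof.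
move=> vS vp Gvz; rewrite !inE; apply/orP; right.
have p'p : p' != p by rewrite eq_sym.
have := groupM (link_tperm_pair cyc3_link_id' vS p'p vp) Gvz.
by rewrite -mulgA (mulgA (tperm p v)) tperm2 mul1g.
Qed.

Lemma cyc3_link_cyc3 a b c : a \in cyc3_link -> b \in cyc3_link -> c \in cyc3_link ->
  a != b -> b != c -> a != c -> cyc3 a b c \in G.
Proof.
move=> aS bS cS ab bc ac; case: (eqVneq a p) => [ap|ap].
  by subst a; rewrite /cyc3 link_tperm_pair // eq_sym.
case: (eqVneq b p) => [bp|bp].
  by subst b; rewrite cyc3_rot // /cyc3 link_tperm_pair // eq_sym.
case: (eqVneq c p) => [cp|cp].
  by subst c; rewrite (cyc3_rot ab bc ac) (cyc3_rot bc _ _) 1?eq_sym // /cyc3 link_tperm_pair.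
have -> : cyc3 a b c = (tperm p a * tperm p b) * (tperm p c * tperm p a).
  move: ab bc ac ap bp cp => /eqP ab /eqP bc /eqP ac /eqP ap /eqP bp /eqP cp.
  rewrite /cyc3; perm_by_cases.
by rewrite groupM // link_tperm_pair.
Qed.

Lemma cyc3_link_extract u v z : u \in cyc3_link -> v \in cyc3_link ->
  u != v -> z != u -> z != v -> cyc3 u v z \in G -> z \in cyc3_link.
Proof.
move=> uS vS uv zu zv Guvz; case: (eqVneq z p) => [->|zp]; first exact: cyc3_link_id.
case: (eqVneq u p) => [up|up].
  by subst u; apply: (link_of_tperm_pair vS _ Guvz); rewrite eq_sym.
case: (eqVneq v p) => [vp|vp].
  subst v; rewrite cyc3_rot // 1?eq_sym // in Guvz.
  have p'p : p' != p by rewrite eq_sym.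
  have := groupM Guvz (link_tperm_pair uS cyc3_link_id' up p'p).
  rewrite /cyc3 -mulgA (mulgA (tperm p u)) tperm2 mul1g => /groupVr.
  by rewrite invMg !tpermV => Gzp'; rewrite !inE Gzp' orbT.
have Gpuv : (cyc3 p u v)^-1 \in G by rewrite groupV /cyc3 link_tperm_pair.
(* Conjugating by (p u v)^-1 turns the 3-cycle (u v z) into (p u z). *)
have := groupJ Guvz Gpuv; rewrite cyc3J.
have -> : (cyc3 p u v)^-1 u = p.
  by apply: (canLR (permK _)); rewrite /cyc3 permM tpermL tpermD // eq_sym.
have -> : (cyc3 p u v)^-1 v = u.
  by apply: (canLR (permK _)); rewrite /cyc3 permM tpermR tpermL.
have -> : (cyc3 p u v)^-1 z = z.
  by apply: (canLR (permK _)); rewrite /cyc3 permM !tpermD // eq_sym.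
by apply: (link_of_tperm_pair uS up).
Qed.

Lemma cyc3_link_stable g a b : g \in G -> a \in cyc3_link -> b \in cyc3_link -> a != b ->
  g a \in cyc3_link -> g b \in cyc3_link ->
  forall y, y \in cyc3_link -> g y \in cyc3_link.
Proof.
move=> gG aS bS ab gaS gbS y yS.
case: (eqVneq y a) => [->//|ya]; case: (eqVneq y b) => [->//|yb].
have Gaby : cyc3 a b y \in G by apply: cyc3_link_cyc3; rewrite // eq_sym.
have := groupJ Gaby gG; rewrite cyc3J => Gg.
by apply: (cyc3_link_extract gaS gbS _ _ _ Gg); rewrite (inj_eq perm_inj).
Qed.

Lemma cyc3_link_full : (forall y, y \in cyc3_link) -> 'Alt_T \subset G.
Proof.
move=> Hall; rewrite (Alt_cyc3_gen pp') gen_subG.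
apply/subsetP => s /imsetP [y]; rewrite inE => yp ->; exact: cyc3_linkP.
Qed.

End Cyc3Link.
End Links.

Section Instructions.
Variables (A : finType) (n : nat) (r0 : A).
Local Notation T := {ffun 'I_n -> A}.
Implicit Types (x c : T) (j : 'I_n) (F : T -> {perm A}).

Definition upd x j (b : A) : T := [ffun i => if i == j then b else x i].

Lemma upd_same x j b : upd x j b j = b.
Proof. by rewrite ffunE eqxx. Qed.

Lemma upd_other x j b i : i != j -> upd x j b i = x i.
Proof. by rewrite ffunE => /negbTE ->. Qed.

Lemma upd_upd x j b b' : upd (upd x j b) j b' = upd x j b'.
Proof. by apply/ffunP => i; rewrite !ffunE; case: eqP. Qed.

Lemma upd_id x j : upd x j (x j) = x.
Proof. by apply/ffunP => i; rewrite !ffunE; case: eqP => [->|]. Qed.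

Lemma upd_inj x j : injective (upd x j).
Proof. by move=> b b' /ffunP /(_ j); rewrite !upd_same. Qed.

(* The instruction updating register [j] by the permutation [F c] of [A], where
   the context [c] is the state with register [j] reset to [r0]. *)
Definition instr_fun j F x := upd x j (F (upd x j r0) (x j)).

Lemma instr_fun_inj j F : injective (instr_fun j F).
Proof.
move=> x y; rewrite /instr_fun => Exy.
have Ec : upd x j r0 = upd y j r0.
  by have := congr1 (fun z : T => upd z j r0) Exy; rewrite !upd_upd.
move: (congr1 (fun z : T => z j) Exy); rewrite !upd_same Ec => /perm_inj Ej.
by rewrite -(upd_id x j) -(upd_id y j) Ej -(upd_upd x j r0) Ec upd_upd upd_id.
Qed.

Definition instr j F : {perm T} := perm (@instr_fun_inj j F).

Lemma instrE j F x : instr j F x = upd x j (F (upd x j r0) (x j)).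
Proof. by rewrite permE. Qed.

Lemma instr_other j F x i : i != j -> instr j F x i = x i.
Proof. by move=> ij; rewrite instrE upd_other. Qed.

Lemma instrM j F F' : instr j F * instr j F' = instr j (fun c => F c * F' c).
Proof. by apply/permP => x; rewrite permM !instrE !upd_upd upd_same permM. Qed.

Lemma instrX j F m : instr j F ^+ m = instr j (fun c => F c ^+ m).
Proof.
elim: m => [|m IH]; first by apply/permP => x; rewrite instrE !perm1 upd_id.
by rewrite expgS IH instrM; apply/permP => x; rewrite !instrE expgS.
Qed.

Lemma instr_prod j (I : Type) (s : seq I) (P : pred I) (F : I -> T -> {perm A}) :
  \prod_(i <- s | P i) instr j (F i) = instr j (fun c => \prod_(i <- s | P i) F i c).
Proof.
elim: s => [|i s IH].
  by rewrite !big_nil; apply/permP => x; rewrite instrE big_nil !perm1 upd_id.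
rewrite big_cons IH; case Pi: (P i); rewrite ?instrM; apply/permP => x;
  by rewrite !instrE big_cons Pi.
Qed.

Definition contexts j := [set c : T | c j == r0].

Definition instr_at j c (s : {perm A}) := instr j (fun c' => if c' == c then s else 1).

Lemma instr_at_tperm j c a b : c j = r0 ->
  instr_at j c (tperm a b) = tperm (upd c j a) (upd c j b).
Proof.
move=> cj; apply/permP => x; rewrite instrE.
case: (eqVneq (upd x j r0) c) => [Ec|Nc].
  have Ex : x = upd c j (x j) by rewrite -Ec upd_upd upd_id.
  by rewrite {1}Ex upd_upd {2}Ex (inj_tperm _ _ _ (@upd_inj c j)).
rewrite perm1 upd_id tpermD //; apply/eqP => Ex; move/eqP: Nc; apply;
  by rewrite -Ex upd_upd -cj upd_id.
Qed.

Lemma odd_instr_at j c s : c j = r0 -> odd_perm (instr_at j c s) = odd_perm s.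
Proof.
move=> cj; case: (prod_tpermP s) => ts -> dts.
have -> : instr_at j c (\prod_(t <- ts) tperm t.1 t.2) =
    \prod_(t <- ts) instr_at j c (tperm t.1 t.2).
  rewrite /instr_at instr_prod; apply/permP => x; rewrite !instrE.
  by case: eqP => // _; rewrite big1.
under eq_bigr do rewrite instr_at_tperm //.
rewrite -(big_map (fun t => (upd c j t.1, upd c j t.2)) xpredT (fun t => tperm t.1 t.2)).
rewrite !odd_perm_prod ?size_map // all_map; apply/allP => t tin /=.
by rewrite (inj_eq (@upd_inj c j)); apply: (allP dts).
Qed.

Lemma odd_instr j F :
  odd_perm (instr j F) = \big[addb/false]_(c in contexts j) odd_perm (F c).
Proof.
have -> : instr j F = \prod_(c in contexts j) instr_at j c (F c).
  rewrite /instr_at instr_prod; apply/permP => x; rewrite !instrE -big_mkcondr.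
  rewrite (big_pred1 (upd x j r0)) // => c /=; rewrite eq_sym inE andb_idl // => /eqP ->.
  by rewrite upd_same.

rewrite (big_morph (@odd_perm _) (@odd_permM _) (@odd_perm1 _)); apply: eq_bigr => c.
by rewrite inE => /eqP; apply: odd_instr_at.
Qed.

Lemma odd_card_contexts j : 1 < n -> odd #|contexts j| -> odd #|A|.
Proof.
move=> hn; have cardE : #|contexts j| =
    foldr muln 1%N [seq #|(if i == j then pred1 r0 else predT)| | i : 'I_n].
  rewrite -card_family; apply: eq_card => c; rewrite inE.
  apply/eqP/familyP => [cj i|cF]; first by case: eqP => [->|]; rewrite ?inE ?cj.
  by have := cF j; rewrite eqxx inE => /eqP.
have odd_foldr s : odd (foldr muln 1%N s) = all odd s by elim: s => //= x s IH; rewrite oddM IH.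
rewrite cardE odd_foldr => /allP odd_all.
have [k kj] : exists k : 'I_n, k != j.
  case: (eqVneq j (Ordinal hn)) => [->|jn]; first by exists (Ordinal (ltnW hn)).
  by exists (Ordinal hn); rewrite eq_sym.
by have := odd_all _ (map_f _ (mem_enum _ k)); rewrite (negbTE kj) cardT enumT.
Qed.

End Instructions.

Lemma big_addb_const (I : finType) (D : {pred I}) b :
  \big[addb/false]_(i in D) b = odd #|D| && b.
Proof. by rewrite big_const; elim: #|D| => //= k ->; case: b; case: (odd k). Qed.

Lemma big_addb_eq (I : finType) (D : {pred I}) e :
  \big[addb/false]_(i in D) (i == e) = (e \in D).
Proof.
case: (boolP (e \in D)) => eD.
  by rewrite (bigD1 e) //= eqxx big1 // => c /andP [_ /negbTE].
by rewrite big1 // => c cD; apply/negbTE; apply: contraNneq eD => <-.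
Qed.

Section EnumCycles.
Variables (A : finType) (d : A).
Local Notation q := #|A|.

Definition elt k := nth d (enum A) k.
Definition pos (a : A) := index a (enum A).

Lemma pos_lt a : pos a < q.
Proof. by rewrite cardE index_mem mem_enum. Qed.

Lemma elt_pos a : elt (pos a) = a.
Proof. by rewrite /elt /pos nth_index // mem_enum. Qed.

Lemma pos_elt k : k < q -> pos (elt k) = k.
Proof. by move=> kq; rewrite /pos /elt index_uniq -?cardE ?enum_uniq. Qed.

Lemma elt_inj k l : k < q -> l < q -> elt k = elt l -> k = l.
Proof. by move=> kq lq Ekl; rewrite -(pos_elt kq) -(pos_elt lq) Ekl. Qed.

Definition cycle_succ lo k := if k < lo then k else if k.+1 < q then k.+1 else lo.

Lemma cycle_succ_lt lo k : k < q -> cycle_succ lo k < q.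
Proof.
by move=> kq; rewrite /cycle_succ; case: (ltnP k lo) => //; case: (ltnP k.+1 q) => //; lia.
Qed.

Lemma cycle_succ_inj lo k l : k < q -> l < q -> cycle_succ lo k = cycle_succ lo l -> k = l.
Proof.
by move=> kq lq; rewrite /cycle_succ; case: (ltnP k lo); case: (ltnP l lo);
  case: (ltnP k.+1 q); case: (ltnP l.+1 q); lia.
Qed.

Definition cycle_from_fun lo a := elt (cycle_succ lo (pos a)).

Lemma cycle_from_fun_inj lo : injective (cycle_from_fun lo).
Proof.
move=> a b /elt_inj Eab; rewrite -(elt_pos a) -(elt_pos b); congr elt.
by apply: (@cycle_succ_inj lo); rewrite ?pos_lt // Eab // cycle_succ_lt // pos_lt.
Qed.

(* The cycle (elt lo, elt lo.+1, ..., elt q.-1), fixing the first [lo] elements. *)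
Definition cycle_from lo : {perm A} := perm (@cycle_from_fun_inj lo).

Lemma cycle_fromE lo a : cycle_from lo a = elt (cycle_succ lo (pos a)).
Proof. by rewrite permE. Qed.

Lemma cycle_from_closed lo (B : pred A) b0 : lo < q -> lo <= pos b0 -> B b0 ->
  (forall a, B a -> B (cycle_from lo a)) -> forall a, lo <= pos a -> B a.
Proof.
move=> loq lob0 Bb0 BS.
have Bsucc k : lo <= k -> k.+1 < q -> B (elt k) -> B (elt k.+1).
  move=> lok kq Bk; have := BS _ Bk; rewrite cycle_fromE pos_elt; last by lia.
  by rewrite /cycle_succ ltnNge lok /= kq.
have Bup k m : lo <= k -> k + m < q -> B (elt k) -> B (elt (k + m)).
  move=> lok; elim: m => [|m IH] kmq Bk; first by rewrite addn0.
  by rewrite addnS; apply: Bsucc; [lia|lia|apply: IH => //; lia].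
have Blo : B (elt lo).
  have lastE : pos b0 + (q.-1 - pos b0) = q.-1 by have := pos_lt b0; lia.
  have Blast : B (elt q.-1).
    by rewrite -lastE; apply: Bup; rewrite ?elt_pos // lastE; lia.
  have := BS _ Blast; rewrite cycle_fromE pos_elt /cycle_succ; last by lia.
  have -> : (q.-1 < lo) = false by lia.
  by have -> : (q.-1.+1 < q) = false by lia.
move=> a loa; have := Bup _ (pos a - lo) (leqnn lo); rewrite subnKC // elt_pos.
by apply => //; apply: pos_lt.
Qed.

Lemma odd_cycle_from0 : 0 < q -> odd_perm (cycle_from 0) = ~~ odd q.
Proof.
move=> q0; set s := cycle_from 0.
have orbit_all a : a \in porbit s (elt 0).
  apply: (@cycle_from_closed 0 (fun a => a \in porbit s (elt 0)) (elt 0)) => //.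
    exact: porbit_id.
  move=> b; rewrite -eq_porbit_mem => /eqP <-.
  by have := mem_porbit s 1 b; rewrite expg1.
rewrite /odd_perm; have -> : porbits s = [set porbit s (elt 0)].
  apply/setP => P; rewrite inE; apply/imsetP/eqP => [[x _ ->]|->].
    by apply/eqP; rewrite eq_porbit_mem.
  by exists (elt 0).
by rewrite cards1 addbT.
Qed.

End EnumCycles.

Section Registers.
Variables (A : finType) (n : nat) (d : A).
Hypotheses (hA : 1 < #|A|) (hn : 1 < n).
Local Notation T := {ffun 'I_n -> A}.
Implicit Types (x y z u c : T) (a b : A).

Definition a0 := elt d 0.
Definition a1 := elt d 1.
Definition a2 := elt d 2.
Definition sgm := cycle_from d 0.
Definition sgm' := cycle_from d 1.
Definition i0 : 'I_n := Ordinal (ltnW hn).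
Definition i1 : 'I_n := Ordinal hn.
Definition P0 : T := [ffun _ => a0].
Definition spot a := upd P0 i0 a.

Local Notation gen := (instr a0).

Lemma i10 : i1 != i0. Proof. by []. Qed.

Lemma a01 : a0 != a1.
Proof. by apply/eqP => /elt_inj => /(_ (ltnW hA) hA). Qed.

Lemma a02 : 2 < #|A| -> a0 != a2.
Proof. by move=> hA3; apply/eqP => /elt_inj => /(_ (ltnW (ltnW hA3)) hA3). Qed.

Lemma a12 : 2 < #|A| -> a1 != a2.
Proof. by move=> hA3; apply/eqP => /elt_inj => /(_ (ltnW hA3) hA3). Qed.

Lemma sgm_a0 : sgm a0 = a1.
Proof. by rewrite /sgm cycle_fromE /a0 pos_elt ?(ltnW hA) // /cycle_succ /= hA. Qed.

Lemma sgm'_a0 : sgm' a0 = a0.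
Proof. by rewrite /sgm' cycle_fromE /a0 pos_elt ?(ltnW hA). Qed.

Lemma sgm_closed (B : pred A) b0 : B b0 -> (forall a, B a -> B (sgm a)) -> forall a, B a.
Proof. by move=> Bb0 BS a; apply: (@cycle_from_closed _ d 0 B b0) => //; apply: ltnW. Qed.

Lemma sgm'_closed (B : pred A) b0 : b0 != a0 -> B b0 ->
  (forall a, B a -> B (sgm' a)) -> forall a, a != a0 -> B a.
Proof.
have pos_a0 a : a != a0 -> 0 < pos a.
  by move=> aa0; rewrite lt0n; apply: contraNneq aa0 => p0; rewrite -(elt_pos d a) p0.
by move=> b0a0 Bb0 BS a aa0; apply: (@cycle_from_closed _ d 1 B b0); rewrite ?pos_a0.
Qed.

Lemma P0E i : P0 i = a0. Proof. by rewrite ffunE. Qed.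

Lemma upd_eq_id x i : x i = a0 -> upd x i a0 = x.
Proof. by move=> xi; rewrite -{1}xi upd_id. Qed.

Lemma spot_a0 : spot a0 = P0. Proof. exact/upd_eq_id/P0E. Qed.

Lemma spot_i0 a : spot a i0 = a. Proof. exact: upd_same. Qed.

Lemma spot_other a i : i != i0 -> spot a i = a0.
Proof. by move=> ii0; rewrite upd_other ?P0E. Qed.

Lemma neq_at x y i : x i != y i -> x != y.
Proof. by apply: contraNneq => ->. Qed.

Lemma spot_inj : injective spot. Proof. exact: upd_inj. Qed.

Lemma neq_spot_any c a : c != spot (c i0) -> c != spot a.
Proof. by apply: contraNneq => ->; rewrite spot_i0. Qed.

Lemma upd_spot_neq a j b : j != i0 -> b != a0 -> upd (spot a) j b != spot a.
Proof. by move=> ji0 ba0; apply: (@neq_at _ _ j); rewrite upd_same spot_other. Qed.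

Lemma upd_spot_i0 a j b : j != i0 -> upd (spot a) j b i0 = a.
Proof. by rewrite eq_sym => ?; rewrite upd_other // spot_i0. Qed.

Lemma gen_i0_spot F a : gen i0 F (spot a) = spot (F P0 a).
Proof. by rewrite instrE /spot !upd_upd upd_same (upd_eq_id (P0E i0)). Qed.

Lemma gen_spot F j a : j != i0 -> gen j F (spot a) = upd (spot a) j (F (spot a) a0).
Proof. by move=> ji0; rewrite instrE upd_eq_id ?spot_other. Qed.

Lemma gen_i0_upd_spot F a b :
  gen i0 F (upd (spot a) i1 b) = upd (spot (F (upd P0 i1 b) a)) i1 b.
Proof.
have xi0 : upd (spot a) i1 b i0 = a by rewrite upd_other ?spot_i0.
have cE : upd (upd (spot a) i1 b) i0 a0 = upd P0 i1 b.
  apply/ffunP => i; rewrite !ffunE; case: (eqVneq i i0) => [->|]; first by case: eqP.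
  by case: eqP.
rewrite instrE cE xi0; apply/ffunP => i; rewrite !ffunE.
by case: (eqVneq i i0) => [->|]; case: eqP.
Qed.

Section Layers.
Variables (Phi : 'I_n -> T -> {perm A}) (P : pred T).
Hypothesis P_gen : forall j x, P x -> P (gen j (Phi j) x).
Hypothesis Phi_cycle : forall j c, j != i0 -> c != spot (c i0) -> Phi j c = sgm.
Hypothesis Phi_spot : forall j a, j != i0 -> Phi j (spot a) = sgm \/ Phi j (spot a) = sgm'.

(* Inside a layer any other register can be set freely, avoiding the spot, because
   [sgm] and [sgm'] act transitively on [A] and on [A] minus [a0]. *)
Lemma layer_line u j : u != spot (u i0) -> P u -> j != i0 ->
  forall b, upd u j b != spot (u i0) -> P (upd u j b).
Proof.
move=> uS Pu ji0; set c := upd u j a0; set B := fun b => P (upd u j b).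
have gen_upd b : gen j (Phi j) (upd u j b) = upd u j (Phi j c b).
  by rewrite instrE !upd_upd upd_same.
have BS b : B b -> B (Phi j c b) by rewrite /B -gen_upd; apply: P_gen.
have Buj : B (u j) by rewrite /B upd_id.
have ci0 : c i0 = u i0 by rewrite upd_other // eq_sym.
have all_B : Phi j c = sgm -> forall b, B b.
  by move=> Phi_c; apply: (sgm_closed Buj); rewrite -Phi_c.
case: (eqVneq c (spot (u i0))) => [cS|cS]; last first.
  by move=> b _; apply: all_B; apply: Phi_cycle; rewrite ?ci0.
have [Phi_c|Phi_c] := Phi_spot (u i0) ji0; rewrite -cS in Phi_c.
  by move=> b _; apply: all_B.
have uj : u j != a0 by apply: contraNneq uS => uja0; rewrite -cS /c -uja0 upd_id.
move=> b bS; case: (eqVneq b a0) => [ba0|ba0]; first by rewrite ba0 -/c cS eqxx in bS.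
by apply: (sgm'_closed uj Buj) => // a; rewrite -Phi_c; apply: BS.
Qed.

Lemma layer_off_spot a y z : y i0 = a -> z i0 = a -> y != spot a -> z != spot a ->
  P y -> P z.
Proof.
move=> yi0 zi0 yS zS Py.
have [j1 /andP [j1i0 zj1]] : exists j1, (j1 != i0) && (z j1 != a0).
  apply/existsP; apply: contraNT zS; rewrite negb_exists => /forallP zP.
  apply/eqP/ffunP => i; case: (eqVneq i i0) => [->|ii0]; first by rewrite zi0 spot_i0.
  by have := zP i; rewrite ii0 negbK spot_other // => /eqP.
have neqS x : x j1 = z j1 -> x != spot a.
  by move=> xz; apply: (@neq_at _ _ j1); rewrite xz spot_other.
pose v m : T := [ffun i : 'I_n => if i < m then z i else upd y j1 (z j1) i].
have vj1 m : v m j1 = z j1 by rewrite ffunE upd_same; case: ifP.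
have vi0 m : v m i0 = a by rewrite ffunE zi0 upd_other 1?eq_sym // yi0; case: ifP.
have Pv m : m <= n -> P (v m).
  elim: m => [_|m IH mn].
    have -> : v 0 = upd y j1 (z j1) by apply/ffunP => i; rewrite ffunE.
    by apply: layer_line; rewrite ?yi0 //; apply: neqS; rewrite upd_same.
  have vm_upd : v m.+1 = upd (v m) (Ordinal mn) (z (Ordinal mn)).
    apply/ffunP => i; rewrite !ffunE ltnS leq_eqVlt -val_eqE /=.
    by case: (eqVneq i (Ordinal mn)) => [->|]; rewrite ?eqxx // -val_eqE => /negbTE ->.
  have Pvm : P (v m) by apply: IH; apply: ltnW.
  rewrite vm_upd; case: (eqVneq (Ordinal mn) i0) => [->|mi0].
    by rewrite zi0 -{1}(vi0 m) upd_id.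
  apply: layer_line => //; rewrite vi0; apply: neqS => //.
  by case: (eqVneq j1 (Ordinal mn)) => [<-|ne]; rewrite ?upd_same // upd_other // eq_sym.
have -> : z = v n by apply/ffunP => i; rewrite ffunE ltn_ord.
exact: Pv.
Qed.

Lemma layer_full a y : y i0 = a -> y != spot a -> P y -> P (spot a) ->
  forall z, z i0 = a -> P z.
Proof.
move=> yi0 yS Py PS z zi0; case: (eqVneq z (spot a)) => [->//|zS].
exact: (layer_off_spot yi0 zi0 yS zS Py).
Qed.

Hypothesis P_genV : forall j x, P x -> P ((gen j (Phi j))^-1 x).

(* When [gen i1] moves the spot off itself, the spot is reached backwards. *)
Lemma layer_full_cycle a y : Phi i1 (spot a) = sgm ->
  y i0 = a -> y != spot a -> P y -> forall z, z i0 = a -> P z.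
Proof.
move=> Phi_i1 yi0 yS Py; apply: (layer_full yi0 yS Py).
rewrite -(permK (gen i1 (Phi i1)) (spot a)); apply: P_genV.
rewrite gen_spot // Phi_i1 sgm_a0.
apply: (layer_off_spot yi0 _ yS); rewrite ?upd_spot_i0 ?upd_spot_neq //.
by rewrite eq_sym a01.
Qed.

End Layers.

Section SymDesign.

Definition PhiA j c : {perm A} :=
  if j == i0 then
    if c == P0 then tperm a0 a1
    else if (c == upd P0 i1 (c i1)) && (c i1 != a1) then cyc3 a0 a1 (c i1) else 1
  else if j == i1 then (if c == spot a1 then sgm' else sgm)
  else (if c == P0 then sgm' else sgm).

Definition gA j := gen j (PhiA j).

Lemma PhiA_off j c : j != i0 ->
  PhiA j c = if j == i1 then (if c == spot a1 then sgm' else sgm)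
             else (if c == P0 then sgm' else sgm).
Proof. by rewrite /PhiA => /negbTE ->. Qed.

Lemma PhiA_cycle j c : j != i0 -> c != spot (c i0) -> PhiA j c = sgm.
Proof.
move=> ji0 cS; rewrite PhiA_off // (negbTE (neq_spot_any a1 cS)) -spot_a0.
by rewrite (negbTE (neq_spot_any a0 cS)); case: ifP.
Qed.

Lemma PhiA_spot j a : j != i0 -> PhiA j (spot a) = sgm \/ PhiA j (spot a) = sgm'.
Proof. by move=> ji0; rewrite PhiA_off //; do 2 case: ifP => _; auto. Qed.

Lemma PhiA_i0_upd b : b != a0 -> b != a1 -> PhiA i0 (upd P0 i1 b) = cyc3 a0 a1 b.
Proof.
move=> ba0 ba1; rewrite /PhiA eqxx -spot_a0 (negbTE (upd_spot_neq _ i10 ba0)).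
by rewrite upd_same spot_a0 eqxx ba1.
Qed.

(* The 3-cycles in register [i0] die in the cube, the transposition survives. *)
Lemma gA_cube : gA i0 ^+ 3 = tperm P0 (spot a1).
Proof.
rewrite /gA instrX -spot_a0 -[RHS](@instr_at_tperm _ _ a0 i0 P0 a0 a1) ?P0E //.
apply/permP => x; rewrite !instrE; congr (upd _ _ (fun_of_perm _ _)).
rewrite /PhiA eqxx; case: eqP => [_|cP0].
  by rewrite !expgS expg0 mulg1 !mulgA tperm2 mul1g.
case: ifP => [/andP [/eqP cE ca1]|_]; last by rewrite expg1n.
have ca0 : upd x i0 a0 i1 != a0.
  by apply: contra_not_neq cP0 => ca0; rewrite cE ca0 -spot_a0 upd_eq_id ?spot_other.
by rewrite cyc3_expg3 ?a01 // eq_sym.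
Qed.

Section Reach.
Variable P : pred T.
Hypothesis P_gen : forall j x, P x -> P (gA j x).
Hypothesis P_genV : forall j x, P x -> P ((gA j)^-1 x).
Hypotheses (P_a0 : P (spot a0)) (P_a1 : P (spot a1)).
Hypothesis hqn : (2 < #|A|) || (2 < n).

Let layer_full := layer_full P_gen PhiA_cycle PhiA_spot.
Let layer_full_cycle := layer_full_cycle P_gen PhiA_cycle PhiA_spot P_genV.

Lemma reachA_a0 z : z i0 = a0 -> P z.
Proof.
have seedE : gA i1 (spot a0) = upd (spot a0) i1 a1.
  by rewrite /gA gen_spot // PhiA_off // eqxx (inj_eq spot_inj) (negbTE a01) sgm_a0.
apply: (layer_full (y := upd (spot a0) i1 a1)) => //; first exact: upd_spot_i0.
  by rewrite upd_spot_neq // eq_sym a01.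
by rewrite -seedE; apply: P_gen.
Qed.

Lemma reachA_a1 z : z i0 = a1 -> P z.
Proof.
suff [b [j [ji0 ba0 Pb]]] : exists b j, [/\ j != i0, b != a0 & P (upd (spot a1) j b)].
  by apply: (layer_full (y := upd (spot a1) j b)); rewrite ?upd_spot_i0 ?upd_spot_neq.
case/orP: hqn => [hA3|hn3].
  have [a20 a21] : a2 != a0 /\ a2 != a1 by rewrite !(eq_sym a2) a02 ?a12.
  have cyc3E : cyc3 a0 a1 a2 a0 = a1 by rewrite /cyc3 permM tpermL tpermD ?a01 // eq_sym a02.
  exists a2, i1; split => //; rewrite -[X in spot X]cyc3E -(PhiA_i0_upd a20 a21).
  by rewrite -gen_i0_upd_spot; apply/P_gen/reachA_a0; apply: upd_spot_i0.
pose i2 : 'I_n := Ordinal hn3.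
exists a1, i2; split; rewrite ?(eq_sym a1) ?a01 //.
have [i20 i21] : i2 != i0 /\ i2 != i1 by [].
have PhiE : PhiA i2 (spot a1) = sgm.
  by rewrite PhiA_off // (negbTE i21) -spot_a0 (inj_eq spot_inj) eq_sym (negbTE a01).
by rewrite -[X in upd _ _ X]sgm_a0 -PhiE -gen_spot //; apply: P_gen.
Qed.

Lemma reachA_other b z : b != a0 -> b != a1 -> z i0 = b -> P z.
Proof.
move=> ba0 ba1; apply: (layer_full_cycle (y := upd (spot b) i1 b)).
- by rewrite PhiA_off // eqxx (inj_eq spot_inj) (negbTE ba1).
- exact: upd_spot_i0.
- exact: upd_spot_neq.
have cyc3E : cyc3 a0 a1 b a1 = b by rewrite /cyc3 permM tpermR tpermL.
rewrite -[X in spot X]cyc3E -(PhiA_i0_upd ba0 ba1) -gen_i0_upd_spot.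
by apply/P_gen/reachA_a1; apply: upd_spot_i0.
Qed.

Lemma reachA x : P x.
Proof.
case: (eqVneq (x i0) a0) => [|xa0]; first exact: reachA_a0.
case: (eqVneq (x i0) a1) => [|xa1]; first exact: reachA_a1.
exact: (reachA_other xa0 xa1).
Qed.

End Reach.

Lemma gen_gA : (2 < #|A|) || (2 < n) -> <<[set gA j | j : 'I_n]>> = [set: {perm T}].
Proof.
move=> hqn; pose G := <<[set gA j | j : 'I_n]>>%G.
have gAG j : gA j \in G by rewrite mem_gen // imset_f.
have linked_a0 : spot a0 \in tperm_link G P0 by rewrite spot_a0 tperm_link_id.
have linked_a1 : spot a1 \in tperm_link G P0 by rewrite inE -gA_cube groupX.
have step j : exists2 w, w \in tperm_link G P0 & gA j w \in tperm_link G P0.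
  case: (eqVneq j i0) => [->|ji0].
    by exists (spot a0); rewrite // /gA gen_i0_spot /PhiA !eqxx tpermL.
  pose a := if j == i1 then a1 else a0.
  have Sa : spot a \in tperm_link G P0 by rewrite /a; case: ifP.
  have Phi_a : PhiA j (spot a) = sgm'.
    by rewrite PhiA_off // /a; case: (j == i1); rewrite ?spot_a0 eqxx.
  by exists (spot a); rewrite // /gA gen_spot // Phi_a sgm'_a0 upd_eq_id ?spot_other.
apply: (tperm_link_full (G := G) (p := P0)); apply: reachA => //.
- move=> j x Px; have [w Sw Sgw] := step j; exact: (tperm_link_stable (gAG j) Sw Sgw).
- move=> j x Px; have [w Sw Sgw] := step j.
  by apply: (tperm_link_stable (groupVr (gAG j)) Sgw) => //; rewrite permK.
Qed.

End SymDesign.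

Section AltDesign.
Hypothesis hA3 : 2 < #|A|.

Let a02 := a02 hA3.
Let a12 := a12 hA3.

Definition PhiB j c : {perm A} :=
  if j == i0 then
    if c == P0 then cyc3 a0 a1 a2
    else if c == upd P0 i1 (c i1) then
      tperm a0 (c i1) * (if (c i1 == a1) || (c i1 == a2) then 1 else tperm a1 a2)
    else 1
  else if (c == spot a1) || (c == spot a2) then sgm' else sgm.

Definition gB j := gen j (PhiB j).

Lemma PhiB_off j c : j != i0 ->
  PhiB j c = if (c == spot a1) || (c == spot a2) then sgm' else sgm.
Proof. by rewrite /PhiB => /negbTE ->. Qed.

Lemma PhiB_cycle j c : j != i0 -> c != spot (c i0) -> PhiB j c = sgm.
Proof. by move=> ji0 cS; rewrite PhiB_off // !(negbTE (neq_spot_any _ cS)). Qed.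

Lemma PhiB_spot j a : j != i0 -> PhiB j (spot a) = sgm \/ PhiB j (spot a) = sgm'.
Proof. by move=> ji0; rewrite PhiB_off //; case: ifP; auto. Qed.

Lemma PhiB_i0_upd b : b != a0 -> PhiB i0 (upd P0 i1 b) =
  tperm a0 b * (if (b == a1) || (b == a2) then 1 else tperm a1 a2).
Proof.
move=> ba0; rewrite /PhiB eqxx -spot_a0 (negbTE (upd_spot_neq _ i10 ba0)).
by rewrite upd_same spot_a0 eqxx.
Qed.

Lemma PhiB_i0_upd_a0 b : b != a0 -> PhiB i0 (upd P0 i1 b) a0 = b.
Proof.
move=> ba0; rewrite PhiB_i0_upd // permM tpermL.
by case: ifP => [_|/norP [ba1 ba2]]; rewrite ?perm1 ?tpermD // eq_sym.
Qed.

Lemma expg2_tperm_disjoint (a b c e : A) : a != c -> a != e -> b != c -> b != e ->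
  (tperm a b * tperm c e) ^+ 2 = 1.
Proof. move=> /eqP ac /eqP ae /eqP bc /eqP be; rewrite expgS expg1; perm_by_cases. Qed.

(* The involutions in register [i0] die in the fourth power, the 3-cycle survives. *)
Lemma gB_pow4 : gB i0 ^+ 4 = cyc3 P0 (spot a1) (spot a2).
Proof.
rewrite /gB instrX /cyc3 -spot_a0 -!(@instr_at_tperm _ _ a0 i0 P0) ?P0E // instrM.
apply/permP => x; rewrite !instrE; congr (upd _ _ (fun_of_perm _ _)).
set c := upd x i0 a0; rewrite /PhiB eqxx; case: eqP => [_|cP0].
  by rewrite expgS cyc3_expg3 ?mulg1 // a01.
rewrite mulg1; case: ifP => [/eqP cE|_]; last by rewrite expg1n.
have ca0 : c i1 != a0.
  by apply: contra_not_neq cP0 => ca0; rewrite cE ca0 -spot_a0 upd_eq_id ?spot_other.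
have sq1 (s : {perm A}) : s ^+ 2 = 1 -> s ^+ 4 = 1.
  by move=> s2; rewrite (_ : 4 = 2 * 2)%N // expgM s2 expg1n.
apply: sq1; case: ifP => [_|/norP [ca1 ca2]].
  by rewrite mulg1 expgS expg1 tperm2.
by rewrite expg2_tperm_disjoint ?a01.
Qed.

Lemma odd_PhiB_i0 c :
  odd_perm (PhiB i0 c) = (c == upd P0 i1 a1) (+) (c == upd P0 i1 a2).
Proof.
have updN b : b != a0 -> (P0 == upd P0 i1 b) = false.
  by move=> ba0; rewrite -spot_a0 eq_sym (negbTE (upd_spot_neq _ i10 ba0)).
rewrite /PhiB eqxx; case: eqP => [->|cP0].
  have [a10 a20] : a1 != a0 /\ a2 != a0 by rewrite !(eq_sym _ a0) a01 a02.
  by rewrite odd_cyc3 ?a01 ?a02 // !updN.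
case: ifP => [/eqP cE|cN]; last first.
  rewrite odd_perm1; suff cb b : (c == upd P0 i1 b) = false by rewrite !cb.
  by apply/negbTE; apply: contraFneq cN => ->; rewrite upd_same.
have cb b : (c == upd P0 i1 b) = (c i1 == b) by rewrite {1}cE (inj_eq (@upd_inj _ _ _ _)).
have ca0 : c i1 != a0.
  by apply: contra_not_neq cP0 => ca0; rewrite cE ca0 -spot_a0 upd_eq_id ?spot_other.
rewrite !cb odd_mul_tperm eq_sym ca0 /=.
case: (eqVneq (c i1) a1) => [->|ca1]; first by rewrite /= odd_perm1 (negbTE a12).
by case: eqP => _ /=; rewrite ?odd_perm1 ?odd_tperm ?a12.
Qed.

Lemma odd_PhiB_off j c : j != i0 ->
  odd_perm (PhiB j c) =
    odd_perm sgm (+) ((c == spot a1) (+) (c == spot a2)) && (odd_perm sgm' (+) odd_perm sgm).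
Proof.
move=> ji0; rewrite PhiB_off //.
have S12 : (spot a1 == spot a2) = false by rewrite (inj_eq spot_inj) (negbTE a12).
case: (eqVneq c (spot a1)) => [->|c1]; first rewrite S12 /=.
  by case: (odd_perm sgm); case: (odd_perm sgm').
by case: eqP => _ /=; case: (odd_perm sgm); case: (odd_perm sgm').
Qed.


(* Off register [i0], [gB j] has the parity of [sgm ^+ #|contexts a0 j|]: even, since
   [sgm] is even when [#|A|] is odd, and [#|contexts a0 j|] is even otherwise. *)
Lemma odd_gB j : odd_perm (gB j) = false.
Proof.
have spotD a k : k != i0 -> spot a \in contexts a0 k by move=> ki0; rewrite inE spot_other.
rewrite /gB odd_instr; case: (eqVneq j i0) => [->|ji0].
  under eq_bigr => c _ do rewrite odd_PhiB_i0.
  by rewrite big_split /= !big_addb_eq !inE !upd_other ?P0E ?eqxx.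
under eq_bigr => c _ do rewrite (odd_PhiB_off c ji0).
have : odd_perm sgm = ~~ odd #|A| by rewrite odd_cycle_from0 // ltnW.
move: (odd_perm sgm) (odd_perm sgm') => s s' odd_sgm.
rewrite big_split -big_distrl big_split big_addb_const !big_addb_eq !spotD //=.
rewrite addbF odd_sgm.
by case: (boolP (odd _)) => // /(odd_card_contexts hn) ->.
Qed.

Section Reach.
Variable P : pred T.
Hypothesis P_gen : forall j x, P x -> P (gB j x).
Hypothesis P_genV : forall j x, P x -> P ((gB j)^-1 x).
Hypotheses (P_a0 : P (spot a0)) (P_a1 : P (spot a1)) (P_a2 : P (spot a2)).

Let layer_full := layer_full P_gen PhiB_cycle PhiB_spot.
Let layer_full_cycle := layer_full_cycle P_gen PhiB_cycle PhiB_spot P_genV.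

Lemma reachB_a0 z : z i0 = a0 -> P z.
Proof.
have seedE : gB i1 (spot a0) = upd (spot a0) i1 a1.
  rewrite /gB gen_spot // PhiB_off // !(inj_eq spot_inj) (negbTE a01) (negbTE a02).
  by rewrite sgm_a0.
apply: (layer_full (y := upd (spot a0) i1 a1)) => //.
- exact: upd_spot_i0.
- by rewrite upd_spot_neq // eq_sym a01.
- by rewrite -seedE; apply: P_gen.
Qed.

Lemma reachB_other a z : a != a0 -> z i0 = a -> P z.
Proof.
move=> aa0; have Pseed : P (upd (spot a) i1 a).
  rewrite -[X in spot X](PhiB_i0_upd_a0 aa0) -gen_i0_upd_spot.
  by apply/P_gen/reachB_a0; apply: upd_spot_i0.
have [seed_i0 seedN] := (upd_spot_i0 a a i10, upd_spot_neq a i10 aa0).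
case: (boolP ((a == a1) || (a == a2))) => [/orP a_in12|/norP [aa1 aa2]].
  apply: (layer_full seed_i0 seedN Pseed).
  by case: a_in12 => /eqP ->.
apply: (layer_full_cycle _ seed_i0 seedN Pseed).
by rewrite PhiB_off // !(inj_eq spot_inj) (negbTE aa1) (negbTE aa2).
Qed.

Lemma reachB x : P x.
Proof.
case: (eqVneq (x i0) a0) => [|xa0]; first exact: reachB_a0.
exact: (reachB_other xa0).
Qed.

End Reach.

Lemma gen_gB : <<[set gB j | j : 'I_n]>> = 'Alt_T.
Proof.
pose G := <<[set gB j | j : 'I_n]>>%G.
have gBG j : gB j \in G by rewrite mem_gen // imset_f.
apply/eqP; rewrite eqEsubset; apply/andP; split.
  by rewrite gen_subG; apply/subsetP => s /imsetP [j _ ->]; rewrite Alt_even odd_gB.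
have P0a1 : P0 != spot a1 by rewrite -spot_a0 (inj_eq spot_inj) a01.
pose L := cyc3_link G P0 (spot a1).
have L_a0 : spot a0 \in L by rewrite spot_a0 cyc3_link_id.
have L_a1 : spot a1 \in L by apply: cyc3_link_id'.
have L_a2 : spot a2 \in L by rewrite !inE -gB_pow4 groupX ?orbT.
have step j : exists x y, [/\ x \in L, y \in L, x != y, gB j x \in L & gB j y \in L].
  case: (eqVneq j i0) => [->|ji0].
    have gB_a0 : gB i0 (spot a0) = spot a1.
      by rewrite /gB gen_i0_spot /PhiB !eqxx /cyc3 permM tpermL tpermD ?a01 // eq_sym.
    have gB_a1 : gB i0 (spot a1) = spot a2.
      by rewrite /gB gen_i0_spot /PhiB !eqxx /cyc3 permM tpermR tpermL.
    by exists (spot a0), (spot a1); rewrite gB_a0 gB_a1 (inj_eq spot_inj) a01.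
  have fixed a : (a == a1) || (a == a2) -> gB j (spot a) = spot a.
    move=> a_in12; rewrite /gB gen_spot // PhiB_off // !(inj_eq spot_inj) a_in12.
    by rewrite sgm'_a0 upd_eq_id ?spot_other.
  exists (spot a1), (spot a2); rewrite !fixed ?eqxx ?orbT //.
  by split; rewrite // (inj_eq spot_inj) a12.
apply: (cyc3_link_full (G := G) P0a1); apply: reachB => //.
- move=> j x Lx; have [a [b [La Lb ab Lga Lgb]]] := step j.
  exact: (cyc3_link_stable P0a1 (gBG j) La Lb ab).
- move=> j x Lx; have [a [b [La Lb ab Lga Lgb]]] := step j.
  apply: (cyc3_link_stable P0a1 (groupVr (gBG j)) Lga Lgb); rewrite ?permK //.
  by rewrite (inj_eq perm_inj).
Qed.

End AltDesign.
End Registers.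

Theorem theorem1 (A : finType) (n : nat) :
  2 <= #|A| -> 2 <= n ->
  (~~ ((#|A| == 2) && (n == 2)) ->
     exists g : 'I_n -> {perm {ffun 'I_n -> A}},
       (forall k, instruction (g k)) /\
       <<[set g k | k : 'I_n]>>%g = [set: {perm {ffun 'I_n -> A}}])
  /\
  (3 <= #|A| ->
     exists g : 'I_n -> {perm {ffun 'I_n -> A}},
       (forall k, instruction (g k)) /\
       (forall k, g k \in (Alt {ffun 'I_n -> A})) /\
       <<[set g k | k : 'I_n]>>%g = (Alt {ffun 'I_n -> A})).
Proof.
move=> hA hn; have d : A := enum_val (Ordinal (ltnW hA)).
have instr_instruction r0 (F : 'I_n -> {ffun 'I_n -> A} -> {perm A}) k :
  instruction (instr r0 k (F k)) by exists k => x i; apply: instr_other.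
split=> [not22|hA3].
  have hqn : (2 < #|A|) || (2 < n).
    move: not22; rewrite negb_and (ltn_neqAle 2 #|A|) (ltn_neqAle 2 n) hA hn.
    by rewrite !andbT ![2 == _]eq_sym.
  by exists (gA d hn); split; [move=> k; apply: instr_instruction | apply: gen_gA].
exists (gB d hn); split; first by move=> k; apply: instr_instruction.
by split; [move=> k; rewrite Alt_even odd_gB | apply: gen_gB].
Qed.
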